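(* Let $\mathcal H=\mathbb C^2$ with orthonormal basis $\{|0\rangle,|1\rangle\}$ and let $E_i=\tfrac12|\varphi_i\rangle\langle\varphi_i|$, $i=1,\dots,4$, where $|\varphi_1\rangle=|0\rangle$ and $|\varphi_{j}\rangle=\tfrac1{\sqrt3}|0\rangle+\sqrt{\tfrac23}e^{2\pi i (j-2)/3}|1\rangle$ for $j=2,3,4$ (the qubit SIC-POVM). Let $\mathcal T=\mathcal S(\mathbb C^2)$ be all qubit states and $\mathcal A$ the single POVM $\{E_i\}_{i=1}^4$. Then $(\mathcal T,\mathcal A,\mathcal A)$ is not broadcastable, but for every $n\in\mathbb N$ the map $\Xi_n(\rho)=\sum_{i=1}^4\mathrm{tr}[E_i\rho]\,(3|\varphi_i\rangle\langle\varphi_i|-I)^{\otimes n}$ is a trace-preserving linear map satisfying $\mathrm{tr}[(E_{i_1}\otimes\cdots\otimes E_{i_n})\Xi_n(\rho)]\ge0$ for all $i_1,\dots,i_n$ and all states $\rho$, and $\mathrm{tr}[E_{j}\,\mathrm{tr}_{k^c}\Xi_n(\rho)]=\mathrm{tr}[E_j\rho]$ for all $j$, all $k\in\{1,\dots,n\}$ and all states $\rho$; i.e. the scenario is $1\to n$-pseudo-broadcastable for all $n$.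
   Context: $(\mathcal T,\mathcal A,\mathcal A)$ is broadcastable if there is a completely positive trace-preserving map $\Lambda:\mathcal L(\mathcal H)\to\mathcal L(\mathcal H\otimes\mathcal H)$ such that $\mathrm{tr}[A_k\mathrm{tr}_2\Lambda(\rho)]=\mathrm{tr}[A_k\rho]=\mathrm{tr}[A_k\mathrm{tr}_1\Lambda(\rho)]$ for all $\{A_k\}\in\mathcal A$, $\rho\in\mathcal T$, $k$. $\mathrm{tr}_{k^c}$ denotes the partial trace over all tensor factors except the $k$-th. *)

(* Complex scalars: an arbitrary numClosedFieldType C
   (e.g. complex numbers over a real closed field, or algC). *)
From HB Require Import structures.
From mathcomp Require Import all_boot all_order all_algebra.
Set Implicit Arguments. Unset Strict Implicit. Unset Printing Implicit Defensive.
Import Order.TTheory GRing.Theory Num.Theory.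
Local Open Scope ring_scope.

(* An operator on the Hilbert space C^I (I a finite index set = orthonormal
   basis) is given by its matrix entries A x y = <x|A|y>. *)
Definition op (C : Type) (I : Type) := I -> I -> C.

Definition trace (C : numClosedFieldType) (I : finType) (A : op C I) : C :=
  \sum_(x : I) A x x.

Definition mulop (C : numClosedFieldType) (I : finType) (A B : op C I) : op C I :=
  fun x y => \sum_(z : I) A x z * B z y.

Definition idop (C : numClosedFieldType) (I : finType) : op C I :=
  fun x y => (x == y)%:R.

Definition psd (C : numClosedFieldType) (I : finType) (A : op C I) : Prop :=
  forall v : I -> C, 0 <= \sum_(x : I) \sum_(y : I) (v x)^* * A x y * v y.

Definition is_state (C : numClosedFieldType) (I : finType) (rho : op C I) : Prop :=
  psd rho /\ trace rho = 1.

(* basis of (C^d)^{\otimes n}: functions 'I_n -> 'I_d *)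
Definition qudits (d n : nat) : finType := {ffun 'I_n -> 'I_d}.

Definition tens (C : numClosedFieldType) (d n : nat) (B : 'I_n -> op C 'I_d)
  : op C (qudits d n) :=
  fun x y => \prod_(k < n) B k (x k) (y k).

(* tr_{k^c}: partial trace over all tensor factors except the k-th *)
Definition ptr (C : numClosedFieldType) (d n : nat) (k : 'I_n)
  (X : op C (qudits d n)) : op C 'I_d :=
  fun a b => \sum_(x : qudits d n | x k == a)
               \sum_(y : qudits d n | (y k == b) && [forall j, (j != k) ==> (x j == y j)])
                  X x y.

Definition linear_map (C : numClosedFieldType) (I J : finType)
  (L : op C I -> op C J) : Prop :=
  forall (c : C) (A B : op C I) (x y : J),
    L (fun i j => c * A i j + B i j) x y = c * L A x y + L B x y.

Definition trace_preserving (C : numClosedFieldType) (I J : finType)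
  (L : op C I -> op C J) : Prop :=
  forall A : op C I, trace (L A) = trace A.

(* id_m \otimes L is positive for every m *)
Definition completely_positive (C : numClosedFieldType) (I J : finType)
  (L : op C I -> op C J) : Prop :=
  forall (m : nat) (X : op C ('I_m * I)%type), psd X ->
    psd (fun p q : ('I_m * J)%type => L (fun i j => X (p.1, i) (q.1, j)) p.2 q.2).

Definition cptp (C : numClosedFieldType) (I J : finType)
  (L : op C I -> op C J) : Prop :=
  linear_map L /\ completely_positive L /\ trace_preserving L.

(* (T, A, A) broadcastable; A is a collection of POVMs with outcome set K *)
Definition broadcastable (C : numClosedFieldType) (d : nat) (K : finType)
  (T : op C 'I_d -> Prop) (A : (K -> op C 'I_d) -> Prop) : Prop :=
  exists Lam : op C 'I_d -> op C (qudits d 2),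
    cptp Lam /\
    forall F : K -> op C 'I_d, A F -> forall rho, T rho -> forall k : K,
      trace (mulop (F k) (ptr (ord0 : 'I_2) (Lam rho))) = trace (mulop (F k) rho) /\
      trace (mulop (F k) rho) = trace (mulop (F k) (ptr (ord_max : 'I_2) (Lam rho))).

(* e^{2 pi i / 3} *)
Definition omega (C : numClosedFieldType) : C := (-1 + 'i * sqrtC 3) / 2.

Definition ket (C : numClosedFieldType) (a b : C) : 'I_2 -> C :=
  fun x => if x == ord0 then a else b.

(* phi_1 = |0>, phi_j = 1/sqrt3 |0> + sqrt(2/3) e^{2 pi i (j-2)/3} |1>, j=2,3,4;
   here indexed by i : 'I_4 with i = j - 1 *)
Definition phi (C : numClosedFieldType) (i : 'I_4) : 'I_2 -> C :=
  if i == ord0 then ket 1 0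
  else ket (1 / sqrtC 3) (sqrtC (2 / 3) * omega C ^+ (i : nat).-1).

Definition proj (C : numClosedFieldType) (v : 'I_2 -> C) : op C 'I_2 :=
  fun x y => v x * (v y)^*.

Definition sicE (C : numClosedFieldType) (i : 'I_4) : op C 'I_2 :=
  fun x y => 2^-1 * proj (phi C i) x y.

Definition Xi (C : numClosedFieldType) (n : nat) (rho : op C 'I_2)
  : op C (qudits 2 n) :=
  fun x y => \sum_(i < 4) trace (mulop (sicE C i) rho) *
     tens (fun _ : 'I_n => fun a b => 3 * proj (phi C i) a b - @idop C _ a b) x y.

(* Pseudo-broadcasting: by the SIC overlaps |<phi_i|phi_j>|^2 = 1/3 (i <> j), the
   operators M_i = 3 |phi_i><phi_i| - I form the dual frame, tr[E_j M_i] = delta_ij.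
   Hence every marginal of Xi_n(rho) = sum_i tr[E_i rho] M_i^(x)n reproduces the SIC
   statistics, and on product effects Xi_n(rho) yields the nonnegative numbers
   tr[E_i rho].

   No broadcasting: let u = phi_2 and u' be orthogonal to u.  A broadcasting channel L
   must give L(|u><u|) both marginals equal to |u><u|, so the psd operator L(|u><u|)
   annihilates u' (x) C^2 and C^2 (x) u'.  Similarly L(|0><0|) and L(|1><1|) annihilate
   |0> (x) |1>, and linearity applied to |u><u| + |u'><u'| = I = |0><0| + |1><1| forces
   L(|u><u|) to annihilate |0> (x) |1> too.  These vectors span C^2 (x) C^2, so
   L(|u><u|) = 0, contradicting trace preservation. *)

From HB Require Import structures.
From mathcomp Require Import all_boot all_order all_algebra.
From mathcomp Require Import ring.
From Stdlib Require Import FunctionalExtensionality.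
Import Order.TTheory GRing.Theory Num.Theory.
Local Open Scope ring_scope.
Set Implicit Arguments. Unset Strict Implicit.

Section Operators.
Variables (C : numClosedFieldType) (I : finType).
Implicit Types (A B E : op C I) (u v w : I -> C).

Definition braket u A v : C := \sum_(x : I) \sum_(y : I) (u x)^* * A x y * v y.

Definition dot u v : C := \sum_(x : I) (u x)^* * v x.

Definition delta (x : I) : I -> C := fun y => (y == x)%:R.

Lemma eq_braket u u' A v v' : (forall x, u x = u' x) -> (forall y, v y = v' y) ->
  braket u A v = braket u' A v'.
Proof.
by move=> eu ev; apply: eq_bigr => x _; apply: eq_bigr => y _; rewrite eu ev.
Qed.

Lemma braket_delta A (x y : I) : braket (delta x) A (delta y) = A x y.
Proof.
rewrite /braket (bigD1 x) //= [X in _ + X]big1 => [|x' nx]; last first.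
  by apply: big1 => y' _; rewrite /delta (negbTE nx) rmorph0 !mul0r.
rewrite addr0 (bigD1 y) //= [X in _ + X]big1 => [|y' ny]; last first.
  by rewrite /delta (negbTE ny) mulr0.
by rewrite /delta !eqxx rmorph1 mul1r mulr1 addr0.
Qed.

Lemma dot_conj u v : (dot u v)^* = dot v u.
Proof.
by rewrite /dot rmorph_sum; apply: eq_bigr => x _; rewrite rmorphM /= conjCK mulrC.
Qed.

Lemma braket_idop u : braket u (@idop C I) u = dot u u.
Proof.
apply: eq_bigr => x _; rewrite (bigD1 x) //= big1 => [|y /negbTE xy]; last first.
  by rewrite /idop eq_sym xy mulr0 mul0r.
by rewrite /idop eqxx mulr1 addr0.
Qed.

Lemma braket_subop (c : C) u A B :
  braket u (fun x y => c * A x y - B x y) u = c * braket u A u - braket u B u.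
Proof.
rewrite /braket mulr_sumr -sumrB; apply: eq_bigr => x _.
by rewrite mulr_sumr -sumrB; apply: eq_bigr => y _; ring.
Qed.

Lemma dot_delta (x : I) : dot (delta x) (delta x) = 1.
Proof.
rewrite /dot (bigD1 x) //= big1 => [|y yx]; first by rewrite /delta eqxx rmorph1 mulr1 addr0.
by rewrite /delta (negbTE yx) mulr0.
Qed.

Lemma eq_trace A B : (forall x, A x x = B x x) -> trace A = trace B.
Proof. by move=> e; apply: eq_bigr => x _. Qed.

Lemma eq_trace_mulop E A B : (forall x y, A x y = B x y) ->
  trace (mulop E A) = trace (mulop E B).
Proof. by move=> eAB; apply: eq_trace => x; apply: eq_bigr => z _; rewrite eAB. Qed.

Lemma trace_lincomb (J : finType) (f : J -> C) (T : J -> op C I) :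
  trace (fun x y => \sum_(j : J) f j * T j x y) = \sum_(j : J) f j * trace (T j).
Proof. by rewrite /trace exchange_big; apply: eq_bigr => j _; rewrite mulr_sumr. Qed.

Lemma mulop_lincomb (J : finType) E (f : J -> C) (T : J -> op C I) (x y : I) :
  mulop E (fun x y => \sum_(j : J) f j * T j x y) x y = \sum_(j : J) f j * mulop E (T j) x y.
Proof.
rewrite /mulop; under eq_bigr => z _ do rewrite mulr_sumr.
rewrite exchange_big; apply: eq_bigr => j _ /=.
by rewrite mulr_sumr; apply: eq_bigr => z _; ring.
Qed.

Lemma trace_mulop_lincomb (J : finType) E (f : J -> C) (T : J -> op C I) :
  trace (mulop E (fun x y => \sum_(j : J) f j * T j x y)) =
  \sum_(j : J) f j * trace (mulop E (T j)).
Proof. by rewrite -trace_lincomb; apply: eq_trace => x; rewrite mulop_lincomb. Qed.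

Lemma trace_mulop_scaleD E (c : C) A B :
  trace (mulop E (fun x y => c * A x y + B x y)) = c * trace (mulop E A) + trace (mulop E B).
Proof.
rewrite /trace /mulop mulr_sumr -big_split; apply: eq_bigr => x _.
by rewrite mulr_sumr -big_split; apply: eq_bigr => z _ /=; ring.
Qed.

Lemma braket_linl (a b : C) v w A u :
  braket (fun x => a * v x + b * w x) A u = a^* * braket v A u + b^* * braket w A u.
Proof.
rewrite /braket !mulr_sumr -big_split; apply: eq_bigr => x _ /=.
by rewrite !mulr_sumr -big_split; apply: eq_bigr => y _ /=; rewrite rmorphD !rmorphM; ring.
Qed.

Lemma braket_linr (a b : C) u A v w :
  braket u A (fun y => a * v y + b * w y) = a * braket u A v + b * braket u A w.
Proof.
rewrite /braket !mulr_sumr -big_split; apply: eq_bigr => x _ /=.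
by rewrite !mulr_sumr -big_split; apply: eq_bigr => y _ /=; ring.
Qed.

Lemma real_quadratic_ge0 (c p : C) : 0 <= c ->
  (forall s : C, s \is Num.real -> 0 <= s ^+ 2 * c - s * p) -> p = 0.
Proof.
move=> c_ge0 quad_ge0.
have p_real : p \is Num.real.
  have := quad_ge0 1 (rpred1 _); rewrite expr1n !mul1r => /ger0_real cp_real.
  by have := rpredB (ger0_real c_ge0) cp_real; rewrite opprB addrC subrK.
have c1_neq0 : c + 1 != 0 by rewrite gt_eqF // ltr_wpDl.
pose s := p / (c + 1).
have s_real : s \is Num.real by rewrite rpredM // rpredV rpredD ?rpred1 ?ger0_real.
have p_s : p = s * (c + 1) by rewrite /s divfK.
have := quad_ge0 s s_real.
have -> : s ^+ 2 * c - s * p = - s ^+ 2 by rewrite p_s; ring.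
rewrite oppr_ge0 => s2_le0.
have : s ^+ 2 = 0 by apply/le_anti; rewrite s2_le0 -real_normK // exprn_ge0.
by move/eqP; rewrite expf_eq0 /= p_s => /eqP ->; rewrite mul0r.
Qed.

(* Along the real lines [t = s] and [t = 'i s], nonnegativity of
   [<v + t u|A|v + t u> = t <v|A|u> + t^* <u|A|v> + |t|^2 <u|A|u>] forces
   [<v|A|u> + <u|A|v> = 0] and [<v|A|u> - <u|A|v> = 0]. *)
Lemma psd_braket_kernel A v : psd A -> braket v A v = 0 -> forall u, braket v A u = 0.
Proof.
move=> psdA null_v u.
set p := braket v A u; set r := braket u A v; set c := braket u A u.
have c_ge0 : 0 <= c by exact: psdA.
have line_ge0 t : 0 <= t * p + t^* * r + t * t^* * c.
  have := psdA (fun x => 1 * v x + t * u x).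
  rewrite -[\sum_x _]/(braket _ A _) braket_linl !braket_linr null_v.
  by rewrite -/p -/r -/c rmorph1; congr (0 <= _); ring.
have sum0 : p + r = 0.
  apply: real_quadratic_ge0 c_ge0 _ => s s_real.
  have := line_ge0 (- s); rewrite rmorphN /= (conj_Creal s_real).
  by congr (0 <= _); ring.
have diff0 : 'i * (p - r) = 0.
  apply: real_quadratic_ge0 c_ge0 _ => s s_real.
  have := line_ge0 (- 'i * s); rewrite rmorphM rmorphN /= conjCi (conj_Creal s_real).
  have -> : - 'i * s * p + - - 'i * s * r + - 'i * s * (- - 'i * s) * c =
    s ^+ 2 * c * (- 'i ^+ 2) - s * ('i * (p - r)) by ring.
  by rewrite sqrCi opprK mulr1.
move/eqP: diff0; rewrite mulf_eq0 (negbTE (neq0Ci C)) /= subr_eq0 => /eqP r_p.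
by move/eqP: sum0; rewrite r_p -mulr2n mulrn_eq0 /= => /eqP.
Qed.

Lemma psd_null_lincomb A (a b : C) v w z : psd A ->
  braket v A v = 0 -> braket w A w = 0 -> (forall x, z x = a * v x + b * w x) ->
  braket z A z = 0.
Proof.
move=> psdA null_v null_w ez.
have -> : braket z A z = braket (fun x => a * v x + b * w x) A z.
  by apply: eq_braket.
by rewrite braket_linl (psd_braket_kernel psdA null_v) (psd_braket_kernel psdA null_w) !mulr0 addr0.
Qed.

End Operators.

Arguments delta {C I}.

Section Tensor.
Variables (C : numClosedFieldType) (d n : nat).
Implicit Types (B D : 'I_n -> op C 'I_d) (X : op C (qudits d n)).

Definition upd (x : qudits d n) (k : 'I_n) (b : 'I_d) : qudits d n :=
  [ffun j => if j == k then b else x j].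

Lemma upd_id (x : qudits d n) k : upd x k (x k) = x.
Proof. by apply/ffunP => j; rewrite ffunE; case: eqP => [->|]. Qed.

Lemma ptrE k X a b : ptr k X a b = \sum_(x : qudits d n | x k == a) X x (upd x k b).
Proof.
apply: eq_bigr => x _; rewrite (big_pred1 (upd x k b)) // => y /=.
apply/andP/eqP => [[/eqP yk /forallP y_eq]|->].
  apply/ffunP => j; rewrite ffunE; case: eqP => [->|/eqP jk] //.
  by apply/esym/eqP; exact: implyP (y_eq j) jk.
rewrite ffunE eqxx; split => //; apply/forallP => j; apply/implyP => jk.
by rewrite ffunE (negbTE jk).
Qed.

Lemma trace_ptr k X : trace (ptr k X) = trace X.
Proof.
rewrite /trace (partition_big (fun x : qudits d n => x k) predT) //=.
apply: eq_bigr => a _; rewrite ptrE; apply: eq_bigr => x /eqP <-.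
by rewrite upd_id.
Qed.

Lemma trace_tens B : trace (tens B) = \prod_(k < n) trace (B k).
Proof. by rewrite /trace bigA_distr_bigA. Qed.

Lemma trace_mulop_tens B D :
  trace (mulop (tens B) (tens D)) = \prod_(k < n) trace (mulop (B k) (D k)).
Proof.
rewrite /trace /mulop bigA_distr_bigA; apply: eq_bigr => x _.
by rewrite bigA_distr_bigA; apply: eq_bigr => z _; rewrite /tens -big_split.
Qed.

Lemma ptr_tens k B a b : ptr k (tens B) a b = B k a b * \prod_(j | j != k) trace (B j).
Proof.
rewrite ptrE.
rewrite (eq_bigr (fun x : qudits d n => B k a b * \prod_(j | j != k) B j (x j) (x j))); last first.
  move=> x /eqP xk; rewrite /tens (bigD1 k) //= ffunE eqxx xk; congr (_ * _).
  by apply: eq_bigr => j /negbTE jk; rewrite ffunE jk.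
rewrite -mulr_sumr; congr (_ * _).
(* Make the k-th factor the indicator of [a], so that the constraint [x k == a] is
   absorbed into a full product of sums. *)
pose D j (c : 'I_d) := if j == k then (c == a)%:R else B j c c.
have -> : \prod_(j | j != k) trace (B j) = \prod_j \sum_(c : 'I_d) D j c.
  have indicator_sum : \sum_(c : 'I_d) (c == a)%:R = 1 :> C.
    by rewrite (bigD1 a) //= eqxx big1 ?addr0 // => c /negbTE ->.
  rewrite [RHS](bigD1 k) //= {1}/D eqxx indicator_sum mul1r.
  by apply: eq_bigr => j /negbTE jk; apply: eq_bigr => c _; rewrite /D jk.
rewrite bigA_distr_bigA /= big_mkcond /=; apply: eq_bigr => x _.
rewrite [RHS](bigD1 k) //= {1}/D eqxx; case: eqP => _; rewrite ?mul1r ?mul0r //.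
by apply: eq_bigr => j /negbTE jk; rewrite /D jk.
Qed.

Lemma ptr_lincomb (J : finType) k (f : J -> C) (T : J -> op C (qudits d n)) a b :
  ptr k (fun x y => \sum_(j : J) f j * T j x y) a b = \sum_(j : J) f j * ptr k (T j) a b.
Proof.
rewrite /ptr; under eq_bigr => x _ do rewrite exchange_big.
rewrite exchange_big; apply: eq_bigr => j _.
by rewrite mulr_sumr; apply: eq_bigr => x _; rewrite mulr_sumr.
Qed.

End Tensor.

Notation o0 := (ord0 : 'I_2).
Notation o1 := (@ord_max 1 : 'I_2).

Lemma sum_I2 (R : nmodType) (F : 'I_2 -> R) : \sum_(i : 'I_2) F i = F o0 + F o1.
Proof. by rewrite big_ord_recr big_ord1 /=; congr (F _ + F _); apply: val_inj. Qed.

Lemma I2P (i : 'I_2) : i = o0 \/ i = o1.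
Proof. by case: i => [[|[|?]]] Hi; [left|right|]; rewrite //; apply: val_inj. Qed.

Definition idx2 (a b : 'I_2) : qudits 2 2 := [ffun j => if j == o0 then a else b].

Lemma idx2E0 a b : idx2 a b o0 = a. Proof. by rewrite ffunE. Qed.
Lemma idx2E1 a b : idx2 a b o1 = b. Proof. by rewrite ffunE. Qed.

Lemma idx2K (x : qudits 2 2) : idx2 (x o0) (x o1) = x.
Proof. by apply/ffunP => j; rewrite ffunE; case: (I2P j) => ->. Qed.

Lemma sum_qubits2 (R : nmodType) (F : qudits 2 2 -> R) :
  \sum_(x : qudits 2 2) F x = \sum_(a : 'I_2) \sum_(b : 'I_2) F (idx2 a b).
Proof.
rewrite pair_big (reindex (fun p : 'I_2 * 'I_2 => idx2 p.1 p.2)) //=.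
exists (fun x : qudits 2 2 => (x o0, x o1)) => [[a b] _|x _] /=.
  by rewrite idx2E0 idx2E1.
by rewrite idx2K.
Qed.

Section TwoQubits.
Variable C : numClosedFieldType.
Implicit Types (X : op C (qudits 2 2)) (u v : 'I_2 -> C).

Definition vtens u v : qudits 2 2 -> C := fun x => u (x o0) * v (x o1).

Lemma ptr0E X a c : ptr o0 X a c = \sum_(b : 'I_2) X (idx2 a b) (idx2 c b).
Proof.
rewrite ptrE big_mkcond sum_qubits2 (bigD1 a) //= [X in _ + X]big1 ?addr0 => [|a' na].
  apply: eq_bigr => b _; rewrite idx2E0 eqxx; congr (X _ _).
  by apply/ffunP => j; rewrite !ffunE; case: (I2P j) => ->.
by apply: big1 => b _; rewrite idx2E0 (negbTE na).
Qed.

Lemma ptr1E X b d : ptr o1 X b d = \sum_(a : 'I_2) X (idx2 a b) (idx2 a d).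
Proof.
rewrite ptrE big_mkcond sum_qubits2 exchange_big (bigD1 b) //= [X in _ + X]big1 ?addr0 => [|b' nb].
  apply: eq_bigr => a _; rewrite idx2E1 eqxx; congr (X _ _).
  by apply/ffunP => j; rewrite !ffunE; case: (I2P j) => ->.
by apply: big1 => a _; rewrite idx2E1 (negbTE nb).
Qed.

Lemma braket_ptr0 X u :
  braket u (ptr o0 X) u = \sum_(b : 'I_2) braket (vtens u (delta b)) X (vtens u (delta b)).
Proof.
rewrite /braket !sum_I2; do 2 rewrite !sum_qubits2 !sum_I2.
rewrite !ptr0E !sum_I2 /vtens /delta !idx2E0 !idx2E1 /=.
by rewrite !rmorphM !rmorph_nat /=; ring.
Qed.

Lemma braket_ptr1 X u :
  braket u (ptr o1 X) u = \sum_(a : 'I_2) braket (vtens (delta a) u) X (vtens (delta a) u).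
Proof.
rewrite /braket !sum_I2; do 2 rewrite !sum_qubits2 !sum_I2.
rewrite !ptr1E !sum_I2 /vtens /delta !idx2E0 !idx2E1 /=.
by rewrite !rmorphM !rmorph_nat /=; ring.
Qed.

Lemma ptr0_null X u b : psd X -> braket u (ptr o0 X) u = 0 ->
  braket (vtens u (delta b)) X (vtens u (delta b)) = 0.
Proof. by move=> psdX; rewrite braket_ptr0 => /psumr_eq0P-> //= b' _; exact: psdX. Qed.

Lemma ptr1_null X u a : psd X -> braket u (ptr o1 X) u = 0 ->
  braket (vtens (delta a) u) X (vtens (delta a) u) = 0.
Proof. by move=> psdX; rewrite braket_ptr1 => /psumr_eq0P-> //= a' _; exact: psdX. Qed.

Lemma vtens_delta a b x : vtens (delta a) (delta b) x = delta (idx2 a b) x :> C.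
Proof.
rewrite /vtens /delta -[x in RHS]idx2K.
have -> : (idx2 (x o0) (x o1) == idx2 a b) = (x o0 == a) && (x o1 == b).
  apply/eqP/andP => [/ffunP e|[/eqP-> /eqP->] //].
  by have := e o0; have := e o1; rewrite !ffunE /= => -> ->.
by case: (x o0 == a); case: (x o1 == b); rewrite /= ?mulr1 ?mulr0.
Qed.

Lemma braket_vtens_delta X a b :
  braket (vtens (delta a) (delta b)) X (vtens (delta a) (delta b)) = X (idx2 a b) (idx2 a b).
Proof. by rewrite -braket_delta; apply: eq_braket => x; rewrite vtens_delta. Qed.

Lemma trace_qubits2 X :
  trace X = \sum_(a : 'I_2) \sum_(b : 'I_2)
              braket (vtens (delta a) (delta b)) X (vtens (delta a) (delta b)).
Proof.
rewrite /trace sum_qubits2; apply: eq_bigr => a _; apply: eq_bigr => b _.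
by rewrite braket_vtens_delta.
Qed.

End TwoQubits.

Section Qubit.
Variable C : numClosedFieldType.
Implicit Types (A : op C 'I_2) (u v w : 'I_2 -> C).

Lemma braket_proj u v : braket u (proj v) u = dot u v * dot v u.
Proof.
rewrite /braket /dot mulr_suml; apply: eq_bigr => x _.
by rewrite mulr_sumr; apply: eq_bigr => y _; rewrite /proj; ring.
Qed.

Lemma trace_mulop_proj u A : trace (mulop (proj u) A) = braket u A u.
Proof.
rewrite /trace /mulop exchange_big; apply: eq_bigr => x _.
by apply: eq_bigr => y _; rewrite /proj; ring.
Qed.

Lemma trace_proj v : trace (proj v) = dot v v.
Proof. by apply: eq_bigr => x _; rewrite /proj mulrC. Qed.

Lemma is_state_proj v : dot v v = 1 -> is_state (proj v).
Proof.
move=> v_unit; split=> [u|]; last by rewrite trace_proj.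
by rewrite -[\sum_x _]/(braket u _ u) braket_proj -[dot v u]dot_conj mul_conjC_ge0.
Qed.

Definition resolves_id u w : Prop :=
  forall x y, proj u x y + proj w x y = @idop C _ x y.

Lemma braket_resolves_id u w A : resolves_id u w -> braket u A u + braket w A w = trace A.
Proof.
move=> uw; rewrite /braket -big_split; apply: eq_bigr => x _ /=.
rewrite -big_split /= (eq_bigr (fun y => A x y * @idop C _ y x)) => [|y _]; last first.
  by rewrite -uw /proj; ring.
rewrite (bigD1 x) //= big1 => [|y /negbTE yx]; first by rewrite /idop eqxx mulr1 addr0.
by rewrite /idop yx mulr0.
Qed.

Lemma linear_resolves_id (J : finType) (L : op C 'I_2 -> op C J) u w (x y : J) :
  linear_map L -> resolves_id u w -> L (proj u) x y + L (proj w) x y = L (@idop C _) x y.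
Proof.
move=> linL uw; rewrite -[L (proj u) x y]mul1r -linL; congr (L _ x y).
rewrite /idop; apply: functional_extensionality => a.
by apply: functional_extensionality => b; rewrite mul1r uw.
Qed.

Lemma trace_mulop_sicE i A : trace (mulop (sicE C i) A) = 2^-1 * braket (phi C i) A (phi C i).
Proof.
rewrite -trace_mulop_proj /trace /mulop mulr_sumr; apply: eq_bigr => x _.
by rewrite mulr_sumr; apply: eq_bigr => y _; rewrite mulrA.
Qed.

End Qubit.

Section Omega.
Variable C : numClosedFieldType.
Local Notation w := (omega C).

Lemma sqrt3_real : sqrtC (3 : C) \is Num.real.
Proof. by rewrite ger0_real // sqrtC_ge0 ler0n. Qed.

Lemma omega_conj : w^* = (-1 - 'i * sqrtC 3) / 2.
Proof.
rewrite /omega rmorphM rmorphD rmorphN rmorph1 rmorphM /= conjCi (conj_Creal sqrt3_real).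
by rewrite fmorphV rmorph_nat mulNr.
Qed.

Lemma omega_sqr : w ^+ 2 = w^*.
Proof.
rewrite omega_conj /omega.
have -> : ((-1 + 'i * sqrtC 3) / 2) ^+ 2 = (1 - 2 * 'i * sqrtC 3 + 'i ^+ 2 * sqrtC 3 ^+ 2) / 4 :> C
  by field.
by rewrite sqrCi sqrtCK; field.
Qed.

Lemma omega_mul_conj : w * w^* = 1.
Proof.
rewrite omega_conj /omega.
have -> : (-1 + 'i * sqrtC 3) / 2 * ((-1 - 'i * sqrtC 3) / 2) = (1 - 'i ^+ 2 * sqrtC 3 ^+ 2) / 4 :> C
  by field.
by rewrite sqrCi sqrtCK; field.
Qed.

Lemma omega_cube : w ^+ 3 = 1.
Proof. by rewrite exprS omega_sqr omega_mul_conj. Qed.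

Lemma omega_sum : 1 + w + w ^+ 2 = 0.
Proof. by rewrite omega_sqr omega_conj /omega; field. Qed.

Lemma omega_expr_mod3 k : w ^+ k = w ^+ (k %% 3).
Proof. by rewrite {1}(divn_eq k 3) exprD mulnC exprM omega_cube expr1n mul1r. Qed.

Lemma omega_conjX k : (w ^+ k)^* = w ^+ (2 * k).
Proof. by rewrite rmorphXn /= -omega_sqr -exprM. Qed.

(* For distinct [m n < 3], [z = w^-m w^n] is a primitive cube root of unity. *)
Lemma omega_ratio_sum (m n : nat) : (m < 3)%N -> (n < 3)%N -> m != n ->
  (w ^+ m)^* * w ^+ n + ((w ^+ m)^* * w ^+ n)^* = -1.
Proof.
rewrite rmorphM /= conjCK !omega_conjX -!exprD.
have w12 : w + w ^+ 2 = -1 by rewrite -[RHS]addr0 -omega_sum; ring.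
by case: m => [|[|[|m]]] //; case: n => [|[|[|n]]] // _ _ _;
  rewrite (omega_expr_mod3 (_ + _)) [in X in _ + X](omega_expr_mod3 (_ + _)) /= ?expr1 // addrC.
Qed.

End Omega.

Section Sic.
Variable C : numClosedFieldType.
Local Notation w := (omega C).
Local Notation a := (1 / sqrtC 3 : C).
Local Notation b := (sqrtC (2 / 3) : C).

Lemma inv_sqrt3_real : a \is Num.real.
Proof. by rewrite rpredM ?rpred1 // rpredV sqrt3_real. Qed.

Lemma sqrt_two_thirds_real : b \is Num.real.
Proof. by rewrite ger0_real // sqrtC_ge0 divr_ge0 ?ler0n. Qed.

Lemma inv_sqrt3_sqr : a * a = 3^-1.
Proof. by rewrite -expr2 expr_div_n sqrtCK expr1n mul1r. Qed.

Lemma sqrt_two_thirds_sqr : b * b = 2 / 3.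
Proof. by rewrite -expr2 sqrtCK. Qed.

Lemma inv_sqrt3_neq0 : a != 0.
Proof. by rewrite mul1r invr_eq0 sqrtC_eq0 pnatr_eq0. Qed.

Lemma sqrt_two_thirds_neq0 : b != 0.
Proof. by rewrite sqrtC_eq0 mulf_neq0 ?invr_eq0 ?pnatr_eq0. Qed.

Lemma dot_ket (x y x' y' : C) : dot (ket x y) (ket x' y') = x^* * x' + y^* * y'.
Proof. by rewrite /dot sum_I2. Qed.

Lemma dot_phi_S m n :
  dot (ket a (b * w ^+ m)) (ket a (b * w ^+ n)) = 3^-1 + 2 / 3 * ((w ^+ m)^* * w ^+ n).
Proof.
rewrite dot_ket (conj_Creal inv_sqrt3_real) rmorphM /= (conj_Creal sqrt_two_thirds_real).
transitivity (a * a + b * b * ((w ^+ m)^* * w ^+ n)); first by ring.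
by rewrite inv_sqrt3_sqr sqrt_two_thirds_sqr.
Qed.

Lemma omega_ratio_norm m n : (w ^+ m)^* * w ^+ n * ((w ^+ m)^* * w ^+ n)^* = 1.
Proof.
rewrite rmorphM /= conjCK !omega_conjX -!exprD.
have -> : (2 * m + n + (m + 2 * n) = 3 * (m + n))%N by rewrite mulnDr; ring.
by rewrite exprM omega_cube expr1n.
Qed.

Lemma third_overlap (z : C) : z * z^* = 1 -> z + z^* = -1 ->
  (3^-1 + 2 / 3 * z^*) * (3^-1 + 2 / 3 * z) = 3^-1.
Proof.
move=> z_norm z_sum.
have -> : (3^-1 + 2 / 3 * z^*) * (3^-1 + 2 / 3 * z) =
  9^-1 + 2 / 9 * (z + z^*) + 4 / 9 * (z * z^*) :> C by field.
by rewrite z_norm z_sum; field.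
Qed.

Lemma omegaX_conj_mul k : (w ^+ k)^* * w ^+ k = 1.
Proof.
rewrite omega_conjX -exprD.
have -> : (2 * k + k = 3 * k)%N by ring.
by rewrite exprM omega_cube expr1n.
Qed.

Lemma phi_unit i : dot (phi C i) (phi C i) = 1.
Proof.
case: i => [[|[|[|[|?]]]] lt_i] //; rewrite /phi /=.
  by rewrite dot_ket rmorph1 rmorph0; ring.
all: by rewrite dot_phi_S omegaX_conj_mul; field.
Qed.

Lemma phi_overlap i j : i != j -> dot (phi C i) (phi C j) * dot (phi C j) (phi C i) = 3^-1.
Proof.
have conj_ratio m n : ((w ^+ m)^* * w ^+ n)^* = (w ^+ n)^* * w ^+ m.
  by rewrite rmorphM /= conjCK mulrC.
case: i => [[|[|[|[|?]]]] lt_i] //; case: j => [[|[|[|[|?]]]] lt_j] // _; rewrite /phi /=;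
  try by rewrite !dot_phi_S -conj_ratio; apply: third_overlap;
         [exact: omega_ratio_norm | exact: omega_ratio_sum].
all: rewrite !dot_ket rmorph1 rmorph0 (conj_Creal inv_sqrt3_real).
all: by transitivity (a * a); [ring | exact: inv_sqrt3_sqr].
Qed.

Lemma sicE_sum x y : \sum_(i < 4) sicE C i x y = @idop C _ x y.
Proof.
rewrite /sicE -mulr_sumr !big_ord_recl big_ord0 /phi /= /bump /= !add0n !addn0 addn1 addr0.
have a_conj := conj_Creal inv_sqrt3_real.
have coef_conj k : (b * w ^+ k)^* = b * w ^+ (2 * k).
  by rewrite rmorphM /= (conj_Creal sqrt_two_thirds_real) omega_conjX.
have w4 : w ^+ (2 * 2) = w by rewrite omega_expr_mod3 expr1.
case: (I2P x) => ->; case: (I2P y) => ->; rewrite /proj /ket /idop /=.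
all: rewrite ?rmorph1 ?rmorph0 ?a_conj ?coef_conj ?muln0 ?muln1 ?w4.
- by rewrite !inv_sqrt3_sqr; field.
- transitivity (2^-1 * (a * b) * (1 + w + w ^+ 2)); first by ring.
  by rewrite omega_sum mulr0.
- transitivity (2^-1 * (a * b) * (1 + w + w ^+ 2)); first by ring.
  by rewrite omega_sum mulr0.
- transitivity (2^-1 * (b * b) * (1 + w ^+ 3 + w ^+ 3)); first by ring.
  by rewrite omega_cube sqrt_two_thirds_sqr; field.
Qed.

End Sic.

Section PseudoBroadcast.
Variable C : numClosedFieldType.
Implicit Types (A rho : op C 'I_2).

Definition sic_dual (i : 'I_4) : op C 'I_2 := fun a b => 3 * proj (phi C i) a b - @idop C _ a b.

Lemma trace_sicE_dual i j : trace (mulop (sicE C j) (sic_dual i)) = (i == j)%:R.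
Proof.
rewrite trace_mulop_sicE braket_subop braket_proj braket_idop phi_unit.
have [->|ij] := eqVneq i j; first by rewrite phi_unit /=; field.
by rewrite (mulrC (dot (phi C j) _)) phi_overlap //=; field.
Qed.

Lemma trace_sic_dual i : trace (sic_dual i) = 1.
Proof.
rewrite /trace /sic_dual sumrB -mulr_sumr -[\sum_x proj _ x x]/(trace _) trace_proj phi_unit.
by rewrite sum_I2 /idop !eqxx /=; ring.
Qed.

Lemma sum_trace_sicE A : \sum_(i < 4) trace (mulop (sicE C i) A) = trace A.
Proof.
rewrite /trace /mulop exchange_big; apply: eq_bigr => x _ /=.
rewrite exchange_big (bigD1 x) //= [X in _ + X]big1 => [|y yx].
  by rewrite -mulr_suml sicE_sum /idop eqxx mul1r addr0.
by rewrite -mulr_suml sicE_sum /idop eq_sym (negbTE yx) mul0r.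
Qed.

Lemma trace_sicE_ge0 i rho : is_state rho -> 0 <= trace (mulop (sicE C i) rho).
Proof.
case=> psd_rho _; rewrite trace_mulop_sicE; apply: mulr_ge0; last exact: psd_rho.
by rewrite invr_ge0 ler0n.
Qed.

Lemma Xi_linear n : linear_map (@Xi C n).
Proof.
move=> c A B x y; rewrite /Xi mulr_sumr -big_split; apply: eq_bigr => i _ /=.
by rewrite trace_mulop_scaleD; ring.
Qed.

Lemma Xi_trace_preserving n : trace_preserving (@Xi C n).
Proof.
move=> A; rewrite trace_lincomb -sum_trace_sicE; apply: eq_bigr => i _.
by rewrite trace_tens big1 ?mulr1 // => k _; exact: trace_sic_dual.
Qed.

Lemma Xi_sic_ge0 n (idx : 'I_n -> 'I_4) rho : is_state rho ->
  0 <= trace (mulop (tens (fun k => sicE C (idx k))) (@Xi C n rho)).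
Proof.
move=> rho_state; rewrite trace_mulop_lincomb; apply: sumr_ge0 => i _.
rewrite trace_mulop_tens; apply: mulr_ge0; first exact: trace_sicE_ge0.
by apply: prodr_ge0 => k _; rewrite trace_sicE_dual ler0n.
Qed.

Lemma Xi_marginal n (j : 'I_4) (k : 'I_n) rho :
  trace (mulop (sicE C j) (ptr k (@Xi C n rho))) = trace (mulop (sicE C j) rho).
Proof.
have ptr_Xi : forall a b, ptr k (@Xi C n rho) a b =
    \sum_(i < 4) trace (mulop (sicE C i) rho) * sic_dual i a b.
  move=> a b; rewrite ptr_lincomb; apply: eq_bigr => i _.
  by rewrite ptr_tens big1 ?mulr1 // => l _; exact: trace_sic_dual.
rewrite (eq_trace_mulop _ ptr_Xi) trace_mulop_lincomb (bigD1 j) //= trace_sicE_dual eqxx.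
by rewrite mulr1 big1 ?addr0 // => i ij; rewrite trace_sicE_dual (negbTE ij) mulr0.
Qed.

End PseudoBroadcast.

Lemma sum_ord1_pair (R : nmodType) (T : finType) (G : 'I_1 * T -> R) :
  \sum_(p : 'I_1 * T) G p = \sum_(t : T) G (ord0, t).
Proof.
rewrite (reindex (fun t : T => (ord0, t))) //=.
by exists snd => [t _|[i t] _] //=; rewrite (ord1 i).
Qed.

Section NoBroadcast.
Variable C : numClosedFieldType.
Implicit Types (X : op C (qudits 2 2)) (u w : 'I_2 -> C).

Lemma completely_positive_psd (I J : finType) (L : op C I -> op C J) (A : op C I) :
  completely_positive L -> psd A -> psd (L A).
Proof.
move=> cpL psdA v.
have psd_lift : psd (fun p q : 'I_1 * I => A p.2 q.2).
  move=> u; rewrite sum_ord1_pair; under eq_bigr do rewrite sum_ord1_pair.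
  exact: psdA.
have := cpL 1%N _ psd_lift (fun p => v p.2).
by rewrite sum_ord1_pair; under eq_bigr do rewrite sum_ord1_pair.
Qed.

Lemma pure_marginal0 X u w b : psd X -> trace X = 1 -> resolves_id u w ->
  braket u (ptr o0 X) u = 1 -> braket (vtens w (delta b)) X (vtens w (delta b)) = 0.
Proof.
move=> psdX trX uw marg; apply: ptr0_null => //.
have := braket_resolves_id (ptr o0 X) uw; rewrite trace_ptr trX marg.
by move=> h; apply: (addrI 1); rewrite addr0.
Qed.

Lemma pure_marginal1 X u w a : psd X -> trace X = 1 -> resolves_id u w ->
  braket u (ptr o1 X) u = 1 -> braket (vtens (delta a) w) X (vtens (delta a) w) = 0.
Proof.
move=> psdX trX uw marg; apply: ptr1_null => //.
have := braket_resolves_id (ptr o1 X) uw; rewrite trace_ptr trX marg.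
by move=> h; apply: (addrI 1); rewrite addr0.
Qed.

(* The vectors [w (x) e_b], [e_a (x) w] and [e_0 (x) e_1] span [C^2 (x) C^2]. *)
Lemma psd_null_span_trace0 X (al be : C) : psd X -> al != 0 -> be != 0 ->
  let w := ket be (- al) in
  (forall b, braket (vtens w (delta b)) X (vtens w (delta b)) = 0) ->
  (forall a, braket (vtens (delta a) w) X (vtens (delta a) w) = 0) ->
  braket (vtens (delta o0) (delta o1)) X (vtens (delta o0) (delta o1)) = 0 ->
  trace X = 0.
Proof.
move=> psdX al0 be0 w null_wb null_aw null01.
have null00 : braket (vtens (delta o0) (delta o0)) X (vtens (delta o0) (delta o0)) = 0.
  apply: (psd_null_lincomb (a := be^-1) (b := al / be) psdX (null_aw o0) null01) => x.
  rewrite /vtens /delta /w /ket; case: (I2P (x o0)) => ->; case: (I2P (x o1)) => -> /=; by field.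
have null1b b : braket (vtens (delta o1) (delta b)) X (vtens (delta o1) (delta b)) = 0.
  have null0b : braket (vtens (delta o0) (delta b)) X (vtens (delta o0) (delta b)) = 0.
    by case: (I2P b) => ->.
  apply: (psd_null_lincomb (a := be / al) (b := - al^-1) psdX null0b (null_wb b)) => x.
  rewrite /vtens /delta /w /ket; case: (I2P (x o0)) => ->; case: (I2P (x o1)) => -> /=; by field.
rewrite trace_qubits2 !sum_I2 null00 null01 !null1b; ring.
Qed.

Local Notation k0 := (@Ordinal 4 0 isT).
Local Notation k1 := (@Ordinal 4 1 isT).
Local Notation w1 := (ket (sqrtC (2 / 3)) (- (1 / sqrtC 3)) : 'I_2 -> C).

Lemma resolves_id_basis : resolves_id (phi C k0) (delta o1).
Proof.
move=> x y; rewrite /proj /idop /phi /ket /delta /=.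
by case: (I2P x) => ->; case: (I2P y) => -> /=; rewrite ?rmorph0 ?rmorph1; ring.
Qed.

Lemma resolves_id_phi1 : resolves_id (phi C k1) w1.
Proof.
move=> x y; rewrite /proj /idop /phi /ket /= expr0 mulr1.
case: (I2P x) => ->; case: (I2P y) => -> /=.
all: rewrite ?rmorphN /= (conj_Creal (inv_sqrt3_real C)) (conj_Creal (sqrt_two_thirds_real C)).
all: rewrite ?mulrNN ?mulrN ?mulNr ?inv_sqrt3_sqr ?sqrt_two_thirds_sqr.
all: by first [ring | field].
Qed.

Lemma dot_w1 : dot w1 w1 = 1.
Proof.
rewrite dot_ket rmorphN /= (conj_Creal (inv_sqrt3_real C)) (conj_Creal (sqrt_two_thirds_real C)).
by rewrite mulrNN inv_sqrt3_sqr sqrt_two_thirds_sqr; field.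
Qed.

Section SicBroadcaster.
Variable Lam : op C 'I_2 -> op C (qudits 2 2).
Hypotheses (Lam_linear : linear_map Lam) (Lam_cp : completely_positive Lam)
  (Lam_tp : trace_preserving Lam).
Hypothesis Lam_marginals : forall rho, is_state rho -> forall k : 'I_4,
  trace (mulop (sicE C k) (ptr o0 (Lam rho))) = trace (mulop (sicE C k) rho) /\
  trace (mulop (sicE C k) rho) = trace (mulop (sicE C k) (ptr o1 (Lam rho))).

Lemma broadcast_psd rho : is_state rho -> psd (Lam rho).
Proof. by case=> psd_rho _; exact: completely_positive_psd. Qed.

Lemma broadcast_trace rho : is_state rho -> trace (Lam rho) = 1.
Proof. by case=> _ tr_rho; rewrite Lam_tp. Qed.

Lemma broadcast_marginal0 rho k : is_state rho ->
  braket (phi C k) (ptr o0 (Lam rho)) (phi C k) = braket (phi C k) rho (phi C k).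
Proof.
move=> rho_state; have [+ _] := Lam_marginals rho_state k.
by rewrite !trace_mulop_sicE => /mulfI; apply; rewrite invr_eq0 pnatr_eq0.
Qed.

Lemma broadcast_marginal1 rho k : is_state rho ->
  braket (phi C k) (ptr o1 (Lam rho)) (phi C k) = braket (phi C k) rho (phi C k).
Proof.
move=> rho_state; have [_ +] := Lam_marginals rho_state k.
by rewrite !trace_mulop_sicE => /mulfI e; apply/esym/e; rewrite invr_eq0 pnatr_eq0.
Qed.

Lemma broadcast_pure_null0 k w b : resolves_id (phi C k) w ->
  braket (vtens w (delta b)) (Lam (proj (phi C k))) (vtens w (delta b)) = 0.
Proof.
have st := is_state_proj (phi_unit C k).
move=> res; apply: pure_marginal0 (broadcast_psd st) (broadcast_trace st) res _.
by rewrite broadcast_marginal0 // braket_proj phi_unit mulr1.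
Qed.

Lemma broadcast_pure_null1 k w a : resolves_id (phi C k) w ->
  braket (vtens (delta a) w) (Lam (proj (phi C k))) (vtens (delta a) w) = 0.
Proof.
have st := is_state_proj (phi_unit C k).
move=> res; apply: pure_marginal1 (broadcast_psd st) (broadcast_trace st) res _.
by rewrite broadcast_marginal1 // braket_proj phi_unit mulr1.
Qed.

Lemma sic_broadcast_false : False.
Proof.
have st_e1 : is_state (proj (@delta C _ o1)) by apply: is_state_proj; rewrite dot_delta.
have st_u := is_state_proj (phi_unit C k1).
have st_w := is_state_proj dot_w1.
have X0_01 : Lam (proj (phi C k0)) (idx2 o0 o1) (idx2 o0 o1) = 0.
  by rewrite -braket_vtens_delta; apply: broadcast_pure_null1 resolves_id_basis.
have X1_01 : Lam (proj (delta o1)) (idx2 o0 o1) (idx2 o0 o1) = 0.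
  have e0_delta x : vtens (delta o0) (delta o1) x = vtens (phi C k0) (delta o1) x :> C.
    by rewrite /vtens /delta /phi /ket /=; case: (I2P (x o0)) => ->.
  rewrite -braket_vtens_delta (eq_braket _ e0_delta e0_delta).
  apply: ptr0_null; first exact: broadcast_psd.
  by rewrite broadcast_marginal0 // braket_proj /dot !sum_I2 /delta /phi /ket /=; ring.
have Xu_01 : braket (vtens (delta o0) (delta o1)) (Lam (proj (phi C k1)))
                    (vtens (delta o0) (delta o1)) = 0.
  rewrite braket_vtens_delta.
  have entry_ge0 rho : is_state rho -> 0 <= Lam rho (idx2 o0 o1) (idx2 o0 o1).
    by move=> rho_state; rewrite -braket_vtens_delta; exact: broadcast_psd.
  have := linear_resolves_id (idx2 o0 o1) (idx2 o0 o1) Lam_linear resolves_id_phi1.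
  rewrite -(linear_resolves_id _ _ Lam_linear resolves_id_basis) X0_01 X1_01 addr0.
  by move/eqP; rewrite paddr_eq0 ?entry_ge0 // => /andP[/eqP].
have /eqP := broadcast_trace st_u.
rewrite (psd_null_span_trace0 (broadcast_psd st_u) (inv_sqrt3_neq0 C) (sqrt_two_thirds_neq0 C)) //.
- by rewrite eq_sym oner_eq0.
- by move=> b; apply: broadcast_pure_null0 resolves_id_phi1.
- by move=> a; apply: broadcast_pure_null1 resolves_id_phi1.
Qed.

End SicBroadcaster.

End NoBroadcast.

Theorem mainTheorem8 (C : numClosedFieldType) :
  ~ broadcastable (@is_state C 'I_2) (fun F : 'I_4 -> op C 'I_2 => F = sicE C) /\
  forall n : nat,
    linear_map (@Xi C n) /\
    trace_preserving (@Xi C n) /\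
    (forall (idx : 'I_n -> 'I_4) (rho : op C 'I_2), is_state rho ->
       0 <= trace (mulop (tens (fun k : 'I_n => sicE C (idx k))) (@Xi C n rho))) /\
    (forall (j : 'I_4) (k : 'I_n) (rho : op C 'I_2), is_state rho ->
       trace (mulop (sicE C j) (ptr k (@Xi C n rho))) = trace (mulop (sicE C j) rho)).
Proof.
split.
  case=> Lam [[Lam_linear [Lam_cp Lam_tp]] Lam_marginals].
  exact: (sic_broadcast_false Lam_linear Lam_cp Lam_tp (Lam_marginals _ erefl)).
move=> n; split; first exact: Xi_linear.
split; first exact: Xi_trace_preserving.
split; first by move=> idx rho; exact: Xi_sic_ge0.
by move=> j k rho _; exact: Xi_marginal.
Qed.
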